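(* Let $R\subseteq\mathbb{R}^2$ be open and let $f:R\to\mathbb{R}^2$ be a light $C^1$ function. Let $R_1$ and $R_2$ be distinct connected components of $R\setminus f^{-1}(f(S)\cup C(f))$ with $\overline{R_1}\cap\overline{R_2}\neq\varnothing$, and suppose $f(R_1)=f(R_2)=\Omega$. If $\partial\Omega\cap\operatorname{int}\overline{\Omega}$ consists of a finite number of points, then there is no non-empty, non-degenerate connected set $\gamma\subseteq(\overline{R_1}\cap\overline{R_2}\cap R)\setminus S$ such that $R_1\cup R_2\cup\gamma$ is open.
   Context: A function is light if the preimage of each point is empty or totally disconnected. A connected set is degenerate if it consists of a single point. Write $f=(u,v)$; $J_f=u_xv_y-u_yv_x$ and $S=\{z\in R: J_f(z)=0\}$. $C(f)$ is the set of finite points $\zeta\in\mathbb{R}^2$ for which there is a sequence $(z_n)\subset R$ converging to a point of $\partial R$ or with $|z_n|\to\infty$, such that $f(z_n)\to\zeta$. *)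

(* The plane R^2 is modelled as R * R with the
   product (= Euclidean) topology, for an arbitrary R : realType. *)
From HB Require Import structures.
From mathcomp Require Import all_boot all_order all_algebra.
From mathcomp Require Import all_classical all_reals all_analysis.
Set Implicit Arguments. Unset Strict Implicit. Unset Printing Implicit Defensive.
Import Order.TTheory GRing.Theory Num.Theory.
Import numFieldNormedType.Exports.
Local Open Scope classical_set_scope.
Local Open Scope ring_scope.

Section Defs.
Variable R : realType.
Local Notation P := (R * R)%type.

Definition bdry (A : set P) : set P := closure A `\` interior A.

(* light: preimage (within the domain D) of each point is totally disconnected
   (the empty set is vacuously totally disconnected) *)
Definition light (D : set P) (f : P -> P) : Prop :=
  forall w : P, totally_disconnected (D `&` f @^-1` [set w]).

Definition pdx (f : P -> P) (p : P) : P := derive1 (fun t : R => f (t, p.2)) p.1.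
Definition pdy (f : P -> P) (p : P) : P := derive1 (fun t : R => f (p.1, t)) p.2.

Definition C1_on (D : set P) (f : P -> P) : Prop :=
  forall p : P, D p ->
    [/\ derivable (fun t : R => f (t, p.2)) p.1 1,
        derivable (fun t : R => f (p.1, t)) p.2 1,
        {for p, continuous (pdx f)} &
        {for p, continuous (pdy f)}].

Definition jac (f : P -> P) (p : P) : R :=
  (pdx f p).1 * (pdy f p).2 - (pdy f p).1 * (pdx f p).2.

Definition crit (D : set P) (f : P -> P) : set P := [set z | D z /\ jac f z = 0].

Definition clusterC (D : set P) (f : P -> P) : set P :=
  [set zeta | exists z : nat -> P,
     (forall n, D (z n)) /\
     ((exists b, bdry D b /\ z @ \oo --> b) \/
      ((fun n => `|z n|) @ \oo --> +oo)) /\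
     (f \o z) @ \oo --> zeta].

Definition is_component (A C : set P) : Prop :=
  exists x, A x /\ C = connected_component A x.

Definition degenerate (A : set P) : Prop := exists p, A = [set p].

End Defs.

From HB Require Import structures.
From mathcomp Require Import all_boot all_order all_algebra.
From mathcomp Require Import all_classical all_reals all_analysis.
From mathcomp Require Import ring lra.
Import Order.TTheory GRing.Theory Num.Theory.
Import numFieldNormedType.Exports.
Local Open Scope classical_set_scope.
Local Open Scope ring_scope.

(* Points of gamma adhere to both R1 and R2, and a component absorbs the points
   of its ambient set that adhere to it; so gamma misses the open set
   V = R \ f^-1(f(S) u C(f)) and f(gamma) misses Omega = f(R1), though it lies in
   the closure of Omega by continuity.  Off S the map f is locally open (a
   contraction argument with the derivative frozen at the point), and
   R1 u R2 u gamma is a neighbourhood of gamma, so f(gamma) lies in the interior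
   of the closure of Omega.  Thus f(gamma) is a connected subset of the finite
   set bdry Omega n int cl Omega, i.e. a single point: gamma lies in one fibre,
   which is totally disconnected since f is light, so gamma is degenerate. *)

Section prod_complete.
Context {K : numFieldType} {U V : completePseudoMetricType K}.
(* HB does not infer the pointed uniform structure of the product by itself. *)
HB.instance Definition _ := Pointed.on (U * V)%type.

Lemma prod_cauchy_cvg (F : set_system (U * V)) : ProperFilter F -> cauchy F -> cvg F.
Proof.
move=> FF /cauchy_ballP Fc.
have cauchy_proj (W : pseudoMetricType K) (g : U * V -> W) :
    (forall x y e, ball x e y -> ball (g x) e (g y)) -> cauchy (g @ F).
  move=> gball; apply/cauchy_ballP => e e0; have [[A B] /= [FA FB] AB] := Fc e e0.
  exists (g @` A, g @` B) => /=.
    by split; [apply: filterS FA|apply: filterS FB] => x Ax; exists x.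
  by move=> [_ _] [/= [x Ax <-] [y By <-]]; apply: gball; exact: (AB (x, y)).
have /cauchy_cvg c1 := cauchy_proj _ fst (fun x y e => @proj1 _ _).
have /cauchy_cvg c2 := cauchy_proj _ snd (fun x y e => @proj2 _ _).
apply/cvg_ex; exists (lim (fst @ F), lim (snd @ F)).
apply/cvg_ballP => e e0.
by apply: filterS2 (cvg_ball c1 e0) (cvg_ball c2 e0) => x.
Qed.
End prod_complete.

HB.instance Definition _ (R : realType) :=
  Uniform_isComplete.Build (R * R)%type (@prod_cauchy_cvg R R R).

Section prod_norm.
Context {K : realDomainType} {U V : normedZmodType K}.
Implicit Types (x : U * V) (c : K).

Lemma norm_fst_le x : `|x.1| <= `|x|.
Proof. by rewrite prod_normE le_max lexx. Qed.

Lemma norm_snd_le x : `|x.2| <= `|x|.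
Proof. by rewrite prod_normE le_max lexx orbT. Qed.

Lemma prod_norm_le x c : (`|x| <= c) = (`|x.1| <= c) && (`|x.2| <= c).
Proof. by rewrite prod_normE ge_max. Qed.

Lemma prod_norm_lt x c : (`|x| < c) = (`|x.1| < c) && (`|x.2| < c).
Proof. by rewrite prod_normE gt_max. Qed.
End prod_norm.

Section derive_prod.
Context {R : numFieldType} {U V : normedModType R}.
Variables (G : R -> U * V) (t : R).
Hypothesis dG : derivable G t 1.

Lemma is_derive_fst : is_derive t 1 (fun s => (G s).1) ('D_1 G t).1.
Proof.
have h : (fun h : R => h^-1 *: ((G (h *: 1 + t)).1 - (G t).1)) @ 0^' --> ('D_1 G t).1.
  exact: (cvg_comp _ _ dG (@cvg_fst _ _ _ _ _)).
by apply: DeriveDef; [apply/cvg_ex; eexists; exact: h | exact: cvg_lim h].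
Qed.

Lemma is_derive_snd : is_derive t 1 (fun s => (G s).2) ('D_1 G t).2.
Proof.
have h : (fun h : R => h^-1 *: ((G (h *: 1 + t)).2 - (G t).2)) @ 0^' --> ('D_1 G t).2.
  exact: (cvg_comp _ _ dG (@cvg_snd _ _ _ _ _)).
by apply: DeriveDef; [apply/cvg_ex; eexists; exact: h | exact: cvg_lim h].
Qed.
End derive_prod.

Section MVT_bounds.
Context {R : realType}.

Lemma MVT_le (g dg : R -> R) (a b M : R) :
  (forall x, Num.min a b <= x <= Num.max a b -> is_derive x 1 g (dg x) /\ `|dg x| <= M) ->
  `|g b - g a| <= M * `|b - a|.
Proof.
wlog ab : a b / a <= b => [W H|].
  have [ab|ba] := leP a b; first exact: W ab H.
  rewrite distrC (distrC b a); apply: W (ltW ba) _ => x hx.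
  by apply: H; rewrite minC maxC.
rewrite (min_idPl ab) (max_idPr ab) => H.
have cont : {within `[a, b], continuous g}.
  apply: derivable_within_continuous => x; rewrite in_itv /= => hx.
  by have [[]] := H x hx.
have dH x : x \in `]a, b[ -> is_derive x 1 g (dg x).
  by rewrite in_itv /= => /andP[ax xb]; have [] := H x; rewrite ?(ltW ax) ?(ltW xb).
have [c /[!in_itv] /= cab ->] := MVT_segment ab dH cont.
rewrite normrM (ger0_norm (x := b - a)) ?subr_ge0 // ler_wpM2r ?subr_ge0 //.
by have [] := H c cab.
Qed.

Lemma MVT_affine_le (g dg : R -> R) (c x y e : R) :
  (forall t, Num.min y x <= t <= Num.max y x -> is_derive t 1 g (dg t) /\ `|c - dg t| <= e) ->
  `|g x - g y - (x - y) * c| <= e * `|x - y|.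
Proof.
move=> H; have -> : g x - g y - (x - y) * c = (g x - c * x) - (g y - c * y) by ring.
apply: (@MVT_le (fun t => g t - c * t) (fun t => dg t - c)) => t /H [dg_t dgc].
split; last by rewrite distrC.
by apply: is_deriveB; apply: is_derive_eq (is_deriveZ c (is_derive_id t 1)) (mulr1 c).
Qed.

Lemma MVT_affine_le_prod (G : R -> R * R) (c : R * R) (x y e : R) :
  (forall t, Num.min y x <= t <= Num.max y x -> derivable G t 1 /\ `|c - 'D_1 G t| <= e) ->
  `|G x - G y - (x - y) *: c| <= e * `|x - y|.
Proof.
move=> H; rewrite prod_norm_le; apply/andP; split.
- apply (@MVT_affine_le (fun t => (G t).1) (fun t => ('D_1 G t).1)) => t /H [dG Gc].
  by split; [exact: is_derive_fst | exact: le_trans (norm_fst_le _) Gc].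
- apply (@MVT_affine_le (fun t => (G t).2) (fun t => ('D_1 G t).2)) => t /H [dG Gc].
  by split; [exact: is_derive_snd | exact: le_trans (norm_snd_le _) Gc].
Qed.
End MVT_bounds.

Lemma dist_between_lt {R : realDomainType} {c x y t r : R} : `|c - x| < r -> `|c - y| < r ->
  Num.min y x <= t <= Num.max y x -> `|c - t| < r.
Proof.
rewrite !ltr_distlC => /andP[x1 x2] /andP[y1 y2] /andP[t1 t2].
by rewrite (lt_le_trans _ t1) ?lt_min ?y1 ?x1 // (le_lt_trans t2) // gt_max y2 x2.
Qed.

Section lin2.
Context {R : realFieldType}.
Implicit Types a b v w : R * R.

Definition det2 a b : R := a.1 * b.2 - b.1 * a.2.

(* [lin2 a b] has matrix columns [a] and [b]: the Jacobian matrix of [f] at [p]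
   is [lin2 (pdx f p) (pdy f p)], of determinant [jac f p]. *)
Definition lin2 a b v : R * R := (a.1 * v.1 + b.1 * v.2, a.2 * v.1 + b.2 * v.2).

Definition lin2_inv a b w : R * R :=
  ((b.2 * w.1 - b.1 * w.2) / det2 a b, (a.1 * w.2 - a.2 * w.1) / det2 a b).

Lemma lin2E a b v : lin2 a b v = v.1 *: a + v.2 *: b.
Proof. by congr pair; rewrite /= ![_ * v.1]mulrC ![_ * v.2]mulrC. Qed.

Lemma lin2K a b : det2 a b != 0 -> cancel (lin2 a b) (lin2_inv a b).
Proof. by move=> det0 [v1 v2]; congr pair; rewrite /= /det2; field. Qed.

Lemma lin2_invK a b : det2 a b != 0 -> cancel (lin2_inv a b) (lin2 a b).
Proof. by move=> det0 [w1 w2]; congr pair; rewrite /= /det2; field. Qed.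

Lemma lin2_invD a b : {morph lin2_inv a b : w w' / w + w'}.
Proof. by move=> w w'; congr pair; rewrite /= !mulrDl; ring. Qed.

Lemma lin2_invB a b : {morph lin2_inv a b : w w' / w - w'}.
Proof. by move=> w w'; apply: (addIr (lin2_inv a b w')); rewrite -lin2_invD !subrK. Qed.

Lemma lin2_le a b v : `|lin2 a b v| <= (`|a| + `|b|) * `|v|.
Proof.
rewrite lin2E mulrDl; apply: le_trans (ler_normD _ _) _; rewrite !normrZ.
by apply: lerD; rewrite mulrC ler_wpM2l ?norm_fst_le ?norm_snd_le.
Qed.

Lemma lin2_inv_bounded a b : exists2 K, 0 < K & forall w, `|lin2_inv a b w| <= K * `|w|.
Proof.
pose S := `|a.1| + `|a.2| + `|b.1| + `|b.2|.
exists (S / `|det2 a b| + 1) => [|w]; first by rewrite ltr_wpDl ?divr_ge0 ?addr_ge0.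
have w1 := norm_fst_le w; have w2 := norm_snd_le w.
have m1 := normr_ge0 w.1; have m2 := normr_ge0 w.2.
have n1 := normr_ge0 a.1; have n2 := normr_ge0 a.2.
have n3 := normr_ge0 b.1; have n4 := normr_ge0 b.2.
have div_le (X : R) : `|X| <= S * `|w| -> `|X / det2 a b| <= (S / `|det2 a b| + 1) * `|w|.
  move=> hX; rewrite normrM normfV.
  have Jv : 0 <= `|det2 a b|^-1 by rewrite invr_ge0.
  apply: le_trans (ler_wpM2r Jv hX) _; nra.
rewrite prod_norm_le; apply/andP; split; apply: div_le;
  apply: le_trans (ler_normB _ _) _; rewrite !normrM /S; nra.
Qed.
End lin2.

Lemma contraction_fixed_point {R : realType} {X : completeNormedModType R}
    {U : set X} {T : X -> X} {k : R} :
  0 <= k -> k < 1 -> (forall x, U x -> U (T x)) ->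
  (forall x y, U x -> U y -> `|T x - T y| <= k * `|x - y|) ->
  closed U -> U !=set0 -> exists2 p, U p & p = T p.
Proof.
move=> k0 k1 TU Tk; apply: (@banach_fixed_point _ _ U (mkfun TU)).
by exists (NngNum k0); split => // -[x y] [/= Ux Uy]; exact: Tk.
Qed.

Section strict_diff.
Context {R : realFieldType} {V W : normedModType R}.

Definition is_strict_diff (f : V -> W) (p : V) (L : V -> W) :=
  forall e, 0 < e -> exists2 r, 0 < r & forall q q', `|p - q| < r -> `|p - q'| < r ->
    `|f q - f q' - L (q - q')| <= e * `|q - q'|.

Lemma strict_diff_continuous {f : V -> W} {p : V} {L : V -> W} {C : R} :
  is_strict_diff f p L ->
  (forall v, `|L v| <= C * `|v|) -> {for p, continuous f}.
Proof.
move=> fL LC; have [r r0 fr] := fL 1 ltr01.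
pose M := 1 + `|C|; have M0 : 0 < M by rewrite ltr_pwDl.
apply/cvgrPdist_lt => e e0; near=> q.
have /andP[pr pe] : (`|p - q| < r) && (`|p - q| < e / M).
  by rewrite -lt_min; near: q; apply: cvgr_dist_lt; rewrite // lt_min r0 divr_gt0.
have fpq : `|f p - f q| <= M * `|p - q|.
  rewrite -[f p - f q](subrK (L (p - q))) mulrDl mul1r.
  apply: le_trans (ler_normD _ _) (lerD _ _).
    by apply: le_trans (fr p q _ pr) _; rewrite ?subrr ?normr0 ?mul1r.
  by apply: le_trans (LC _) _; rewrite ler_wpM2r // real_ler_norm // num_real.
by apply: le_lt_trans fpq _; rewrite mulrC -ltr_pdivlMr.
Unshelve. all: end_near. Qed.
End strict_diff.

Section strict_diff_nbhs_image.
Context {R : realType} {V : completeNormedModType R} {W : normedModType R}.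
Context {f : V -> W} {p : V} {L : V -> W} {M : W -> V} {K : R}.
Hypotheses (fL : is_strict_diff f p L) (LK : cancel L M) (MK : cancel M L)
  (MB : {morph M : w w' / w - w'}) (K0 : 0 < K) (M_le : forall w, `|M w| <= K * `|w|).

Let newton y q := q - M (f q - y).

Let newton_fixed y q : q = newton y q -> f q = y.
Proof.
move=> /eqP; rewrite eq_sym subr_eq addrC -subr_eq subrr eq_sym => /eqP Mq.
have M0 : M 0 = 0 by rewrite -(subrr 0) MB subrr.
by apply/eqP; rewrite -subr_eq0 -(MK (f q - y)) Mq -M0 MK.
Qed.

Let newton_sub y q q' : newton y q - newton y q' = - M (f q - f q' - L (q - q')).
Proof.
have -> : f q - f q' = (f q - y) - (f q' - y) by rewrite opprB addrA subrK.
rewrite (MB (_ - _)) MB LK !opprB addrACA [RHS]addrACA; congr (_ + _); exact: addrC.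
Qed.

(* A preimage of [y] is a fixed point of the contraction [newton y] of a small
   closed ball around [p]. *)
Lemma strict_diff_nbhs_image N : nbhs p N -> nbhs (f p) (f @` N).
Proof.
move=> /nbhs_ballP [rho rho0 pN].
have K2 : 0 < K *+ 2 by rewrite mulrn_wgt0.
have [r r0 fr] := fL (K *+ 2)^-1 ltac:(by rewrite invr_gt0).
pose s := Num.min r rho / 2.
have s0 : 0 < s by rewrite divr_gt0 // lt_min r0.
have s_min : s < Num.min r rho by rewrite ltr_pdivrMr // ltr_pMr ?ltr1n // lt_min r0.
have sr : s < r by apply: lt_le_trans s_min _; rewrite ge_min lexx.
have srho : s < rho by apply: lt_le_trans s_min _; rewrite ge_min lexx orbT.
apply/nbhs_ballP; exists (s / (K *+ 2)) => [|y]; first by rewrite /= divr_gt0.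
rewrite -ball_normE /= => fpy.
pose U := closed_ball_ Num.Def.normr p s.
have Ur q : U q -> `|p - q| < r by move=> Uq; exact: le_lt_trans Uq sr.
have Up : U p by rewrite /U /closed_ball_ /= subrr normr0 ltW.
have newton_lip q q' : U q -> U q' -> `|newton y q - newton y q'| <= 2^-1 * `|q - q'|.
  move=> Uq Uq'; rewrite newton_sub normrN; apply: le_trans (M_le _) _.
  apply: le_trans (ler_wpM2l (ltW K0) (fr _ _ (Ur _ Uq) (Ur _ Uq'))) _.
  suff -> : K * ((K *+ 2)^-1 * `|q - q'|) = 2^-1 * `|q - q'| by [].
  by rewrite -mulr_natr; field; rewrite gt_eqF.
have newton_self q : U q -> U (newton y q).
  move=> Uq; rewrite /U /closed_ball_ /= [X in _ <= X](splitr s).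
  apply: le_trans (ler_distD (newton y p) _ _) (lerD _ _).
    rewrite /newton opprB addrC subrK; apply: le_trans (M_le _) _.
    rewrite -ler_pdivlMl // (_ : K^-1 * (s / 2) = s / (K *+ 2)) ?ltW //.
    by rewrite -mulr_natr; field; rewrite gt_eqF.
  by apply: le_trans (newton_lip _ _ Up Uq) _; rewrite mulrC ler_wpM2r ?invr_ge0.
have half_ge0 : 0 <= 2^-1 :> R by rewrite invr_ge0.
have half_lt1 : 2^-1 < 1 :> R by rewrite invf_lt1 ?ltr1n.
have [q Uq /newton_fixed fqy] := contraction_fixed_point half_ge0 half_lt1
  newton_self newton_lip (@closed_closed_ball_ _ _ p s) (ex_intro _ p Up).
by exists q => //; apply: pN; rewrite -ball_normE; exact: le_lt_trans Uq srho.
Qed.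
End strict_diff_nbhs_image.

Section C1.
Context {R : realType}.
Local Notation P := (R * R)%type.
Context {D : set P} {f : P -> P}.
Hypotheses (oD : open D) (C1f : C1_on D f).

Lemma C1_on_is_strict_diff {p} : D p -> is_strict_diff f p (lin2 (pdx f p) (pdy f p)).
Proof.
move=> Dp e e0; have [_ _ cx cy] := C1f p Dp; have e20 : 0 < e / 2 by rewrite divr_gt0.
(* instance search does not find this filter on the product *)
have FP : Filter (nbhs p) := nbhs_filter p.
have Dn : nbhs p D by apply: open_nbhs_nbhs.
have Nx := cvgr_dist_le (FF := FP) _ _ cx _ e20.
have Ny := cvgr_dist_le (FF := FP) _ _ cy _ e20.
have /nbhs_ballP [r r0] := @filterI _ _ FP _ _ Dn (@filterI _ _ FP _ _ Nx Ny).
move=> good; exists r => // -[x1 x2] [y1 y2].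
rewrite !prod_norm_lt => /andP[px1 px2] /andP[py1 py2].
have good_at t s : `|p.1 - t| < r -> `|p.2 - s| < r ->
    [/\ D (t, s), `|pdx f p - pdx f (t, s)| <= e / 2 & `|pdy f p - pdy f (t, s)| <= e / 2].
  move=> pt ps; have pts : ball p r (t, s) by split.
  by have [Dts [hx hy]] := good _ pts; split; [exact: Dts | exact: hx | exact: hy].
have horiz : `|f (x1, x2) - f (y1, x2) - (x1 - y1) *: pdx f p| <= e / 2 * `|x1 - y1|.
  apply (@MVT_affine_le_prod R (fun s => f (s, x2))) => t tb.
  have [Dt hx _] := good_at t x2 (dist_between_lt px1 py1 tb) px2.
  have [dx _ _ _] := C1f _ Dt.
  by split; [exact: dx | rewrite -derive1E; exact: hx].
have vert : `|f (y1, x2) - f (y1, y2) - (x2 - y2) *: pdy f p| <= e / 2 * `|x2 - y2|.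
  apply (@MVT_affine_le_prod R (fun s => f (y1, s))) => t tb.
  have [Dt _ hy] := good_at y1 t py1 (dist_between_lt px2 py2 tb).
  have [_ dy _ _] := C1f _ Dt.
  by split; [exact: dy | rewrite -derive1E; exact: hy].
have -> : f (x1, x2) - f (y1, y2) - lin2 (pdx f p) (pdy f p) ((x1, x2) - (y1, y2)) =
    (f (x1, x2) - f (y1, x2) - (x1 - y1) *: pdx f p) +
    (f (y1, x2) - f (y1, y2) - (x2 - y2) *: pdy f p).
  by rewrite lin2E addrACA subrKA opprD.
rewrite [e](splitr e) mulrDl; apply: le_trans (ler_normD _ _) (lerD _ _).
- apply: le_trans horiz (ler_wpM2l (ltW e20) _).
  exact: (norm_fst_le ((x1, x2) - (y1, y2))).
- apply: le_trans vert (ler_wpM2l (ltW e20) _).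
  exact: (norm_snd_le ((x1, x2) - (y1, y2))).
Qed.

Lemma C1_on_continuous {p} : D p -> {for p, continuous f}.
Proof. by move=> Dp; apply: strict_diff_continuous (C1_on_is_strict_diff Dp) (lin2_le _ _). Qed.

Lemma C1_on_nbhs_image {p N} : D p -> jac f p != 0 -> nbhs p N -> nbhs (f p) (f @` N).
Proof.
move=> Dp J0; have [K K0 K_le] := lin2_inv_bounded (pdx f p) (pdy f p).
have := strict_diff_nbhs_image (C1_on_is_strict_diff Dp)
  (lin2K _ _ J0) (lin2_invK _ _ J0) (lin2_invB _ _) K0 K_le.
by apply.
Qed.

Lemma C1_on_connected_image {A} : A `<=` D -> connected A -> connected (f @` A).
Proof.
move=> AD cA; apply: connected_continuous_connected cA _.
apply: continuous_in_subspaceT => q /set_mem /AD Dq.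
exact (C1_on_continuous Dq).
Qed.
End C1.

Section topology.
Context {T : topologicalType}.
Implicit Types A B : set T.

Lemma connected_between_closure {A B} : connected A -> A `<=` B -> B `<=` closure A ->
  connected B.
Proof.
move=> ctdA AB BcA U U0 [C1 oC1 C1E] [C2 cC2 C2E].
have AU : A `<=` U.
  rewrite -setIidPl; apply: ctdA.
  - move: U0; rewrite C1E => -[z [Bz C1z]].
    have [w [Aw C1w]] := BcA z Bz C1 (open_nbhs_nbhs (conj oC1 C1z)).
    by exists w; split => //; split => //; exact: AB.
  - by exists C1 => //; rewrite C1E setIA (setIidl AB).
  - by exists C2 => //; rewrite C2E setIA (setIidl AB).
apply/seteqP; split; first by rewrite C2E; apply: subIsetl.
move=> x Bx; rewrite C2E; split => //.
have sA : A `<=` C2 by move=> y /AU; rewrite C2E => -[].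
by have := closureS sA; rewrite -((closure_id C2).1 cC2); apply; exact: BcA.
Qed.

Lemma connected_component_closure {A x y} : A x -> A y ->
  closure (connected_component A x) y -> connected_component A x y.
Proof.
move=> Ax Ay cly.
apply: (connected_component_max (B := connected_component A x `|` [set y])).
- by left; exact: connected_component_refl.
- by move=> z [/connected_component_sub //|->].
- apply: (connected_between_closure (@component_connected _ A x)); first by move=> z; left.
  by move=> z [/subset_closure //|->].
- by right.
Qed.

Lemma connected_component_closure_eq {A x1 x2 y} : A x1 -> A x2 -> A y ->
  closure (connected_component A x1) y -> closure (connected_component A x2) y ->
  connected_component A x1 = connected_component A x2.
Proof.
move=> Ax1 Ax2 Ay c1 c2.
rewrite (same_connected_component (connected_component_closure Ax1 Ay c1)).
by rewrite (same_connected_component (connected_component_closure Ax2 Ay c2)).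
Qed.

Lemma closure_image {U : topologicalType} {f : T -> U} {A p} :
  {for p, continuous f} -> closure A p -> closure (f @` A) (f p).
Proof.
move=> cf clAp B /cf /clAp [x [Ax Bfx]].
by exists (f x); split => //; exists x.
Qed.

Lemma totally_disconnected_connected_sub {S A : set T} {x} :
  totally_disconnected S -> connected A -> A `<=` S -> A x -> A = [set x].
Proof.
move=> tdS cA AS Ax; apply/seteqP; split => [y Ay|y ->//].
by rewrite -(tdS x (AS x Ax)); exact: connected_component_max Ax AS cA y Ay.
Qed.

Lemma connected_finite_set1 {A a} : hausdorff_space T -> finite_set A -> connected A ->
  A a -> A = [set a].
Proof.
move=> hT fA cA Aa.
have fin_closed : forall B : set T, finite_set B -> closed B.
  exact/accessible_finite_set_closed/hausdorff_accessible.
symmetry; apply: cA.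
- by exists a.
- exists (~` (A `\ a)).
    by apply: closed_openC; apply: fin_closed; exact: sub_finite_set (@subDsetl _ A [set a]) fA.
  apply/seteqP; split => x; first by move=> ->; split => // -[_]; apply.
  by move=> [Ax nx]; apply: contrapT => xa; apply: nx.
- exists [set a]; first by apply: fin_closed; exact: finite_set1.
  by apply/seteqP; split => x; [move=> ->|move=> [_ ->]].
Qed.
End topology.

Theorem lemma3p16 (R : realType) (D : set (R * R)) (f : R * R -> R * R)
    (R1 R2 Omega : set (R * R)) :
  open D -> light D f -> C1_on D f ->
  is_component (D `\` f @^-1` (f @` crit D f `|` clusterC D f)) R1 ->
  is_component (D `\` f @^-1` (f @` crit D f `|` clusterC D f)) R2 ->
  R1 <> R2 ->
  closure R1 `&` closure R2 !=set0 ->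
  f @` R1 = Omega -> f @` R2 = Omega ->
  finite_set (bdry Omega `&` interior (closure Omega)) ->
  ~ exists gamma : set (R * R),
      [/\ gamma !=set0, ~ degenerate gamma, connected gamma,
          gamma `<=` (closure R1 `&` closure R2 `&` D) `\` crit D f &
          open (R1 `|` R2 `|` gamma)].
Proof.
move=> oD lf C1f [x1 [Vx1 eR1]] [x2 [Vx2 eR2]] R12 _ fR1 fR2 fin
  [gamma [[g0 gg0] ndeg cg gsub oW]].
set V := D `\` _ in Vx1 Vx2 eR1 eR2.
have gD q : gamma q -> D q by move=> /gsub [[_ ]].
have notV q : gamma q -> ~ V q.
  move=> /gsub [[[c1 c2] _] _] Vq; apply: R12; rewrite eR1 eR2 in c1 c2 *.
  exact: connected_component_closure_eq Vx1 Vx2 Vq c1 c2.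
have notOmega q : gamma q -> ~ Omega (f q).
  move=> gq; rewrite -fR1 => -[r R1r frq].
  have [_ Er] : V r by move: R1r; rewrite eR1; exact: connected_component_sub.
  have Efq : ~ (f @` crit D f `|` clusterC D f) (f q) by rewrite -frq; exact: Er.
  by apply: (notV q gq); split; [exact: gD | exact: Efq].
have fW : f @` (R1 `|` R2 `|` gamma) `<=` closure Omega.
  move=> _ [w [[R1w|R2w]|gw] <-].
  - by apply: subset_closure; rewrite -fR1; exists w.
  - by apply: subset_closure; rewrite -fR2; exists w.
  - have [[[c1 _] Dw] _] := gsub w gw.
    by rewrite -fR1; exact: closure_image (C1_on_continuous oD C1f Dw) c1.
have fg_sub : f @` gamma `<=` bdry Omega `&` interior (closure Omega).
  move=> _ [q gq <-]; have [[[_ _] Dq] ncr] := gsub q gq.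
  have J0 : jac f q != 0 by apply/eqP => J0; apply: ncr.
  have Wq : nbhs q (R1 `|` R2 `|` gamma) by apply: open_nbhs_nbhs; split => //; right.
  split; last exact: filterS fW (C1_on_nbhs_image oD C1f Dq J0 Wq).
  split; first by apply: fW; exists q => //; right.
  by move/interior_subset; exact: notOmega.
have fgamma : f @` gamma = [set f g0].
  exact (connected_finite_set1 (@norm_hausdorff _ _) (sub_finite_set fg_sub fin)
    (C1_on_connected_image oD C1f gD cg) (imageP _ gg0)).
apply: ndeg; exists g0; apply: totally_disconnected_connected_sub (lf (f g0)) cg _ gg0.
move=> q gq; split; first exact: gD.
have : (f @` gamma) (f q) by exists q.
by rewrite fgamma.
Qed.
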